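(* Let $G_1$ and $G_2$ be graphs admitting arithmetic IASIs. Then the corona $G_1\circ G_2$ admits an arithmetic IASI (in which $G_1$ and each copy of $G_2$ carry labels with the deterministic indices of the given labelings) if and only if the deterministic index of every vertex of one graph is $k$ times or $1/k$ times the deterministic index of every vertex of the other, for a positive integer $k$ at most the set-indexing number of the vertex having the smaller deterministic index.
   Context: All graphs are simple, finite, with no isolated vertices; all sets are finite subsets of $\mathbb{N}_0$; $A+B=\{a+b:a\in A,b\in B\}$. An IASI of $G$ is an injective $f:V(G)\to 2^{\mathbb{N}_0}$ with $g_f(uv)=f(u)+f(v)$ injective on $E(G)$. The set-indexing number of an element is the cardinality of its set-label. An AP-set is a set whose elements form an arithmetic progression; the common difference of the set-label of an element is its deterministic index. An arithmetic IASI is an IASI under which all vertex and edge set-labels are AP-sets. The corona $G_1\circ G_2$ is obtained from one copy of $G_1$ (with $p_1$ vertices) and $p_1$ copies of $G_2$ by joining the $i$-th vertex of $G_1$ to every vertex of the $i$-th copy of $G_2$. *)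

From mathcomp Require Import all_boot.
Set Implicit Arguments. Unset Strict Implicit. Unset Printing Implicit Defensive.

(* A finite subset of N_0 is represented by a seq nat; two such labels denote
   the same set iff they are extensionally equal (=i). *)

Definition setcard (S : seq nat) : nat := size (undup S).

Definition sumset (A B : seq nat) : seq nat := [seq a + b | a <- A, b <- B].

Definition has_dindex (S : seq nat) (d : nat) : Prop :=
  exists a n, 0 < d /\ 1 < n /\ S =i [seq a + i * d | i <- iota 0 n].

Definition APset (S : seq nat) : Prop := exists d, has_dindex S d.

Definition simple_graph (T : finType) (e : rel T) : Prop :=
  symmetric e /\ irreflexive e /\ (forall x, exists y, e x y).

Definition IASI (T : finType) (e : rel T) (f : T -> seq nat) : Prop :=
  (forall u v, f u =i f v -> u = v) /\
  (forall u v x y, e u v -> e x y ->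
     sumset (f u) (f v) =i sumset (f x) (f y) ->
     (u = x /\ v = y) \/ (u = y /\ v = x)).

Definition arithmetic_IASI (T : finType) (e : rel T) (f : T -> seq nat) : Prop :=
  IASI e f /\ (forall v, APset (f v)) /\
  (forall u v, e u v -> APset (sumset (f u) (f v))).

(* Corona G1 o G2: vertices inl i (the i-th vertex of G1) and inr (i, v)
   (vertex v of the i-th copy of G2). *)
Definition corona (T1 T2 : finType) (e1 : rel T1) (e2 : rel T2)
  : rel (T1 + T1 * T2)%type :=
  fun x y =>
    match x, y with
    | inl a, inl b => e1 a b
    | inl a, inr (i, _) => i == a
    | inr (i, _), inl a => i == a
    | inr (i, v), inr (j, w) => (i == j) && e2 v w
    end.

From mathcomp Require Import all_boot zify.
Set Implicit Arguments. Unset Strict Implicit. Unset Printing Implicit Defensive.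

(* A sum of AP-sets with differences d <= d' is an AP-set iff its two least
   elements differ by d and it has no gap, i.e. iff d' = k d with k <= |A|;
   the edges joining G1 to its copies of G2 force exactly this condition.
   Conversely, under it every edge label of the corona built from the given
   labels is an AP-set, and translating each vertex label by an offset
   2M 2^r (r the rank of the vertex, M a bound on all labels) keeps all labels
   AP while making vertex and edge labels injective, since a sum of two
   distinct powers of 2 determines them. *)

Definition AP a d n := [seq a + i * d | i <- iota 0 n].

Lemma memAP z a d n : z \in AP a d n <-> exists2 i, i < n & z = a + i * d.
Proof.
split.
- by case/mapP=> i; rewrite mem_iota add0n => /andP[_ Hi] ->; exists i.
- by case=> i Hi ->; apply/mapP; exists i => //; rewrite mem_iota add0n.
Qed.

Lemma uniq_AP a d n : 0 < d -> uniq (AP a d n).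
Proof.
move=> Hd; rewrite map_inj_uniq ?iota_uniq // => i j /eqP.
by rewrite eqn_add2l eqn_pmul2r // => /eqP.
Qed.

Lemma setcard_AP S a d n : 0 < d -> S =i AP a d n -> setcard S = n.
Proof.
move=> Hd HS; rewrite /setcard.
have E : undup S =i AP a d n by move=> z; rewrite mem_undup HS.
have := uniq_perm (undup_uniq S) (uniq_AP a n Hd) E.
by move/perm_size ->; rewrite size_map size_iota.
Qed.

Lemma eq_has_dindex S S' d : S =i S' -> has_dindex S d -> has_dindex S' d.
Proof.
move=> E [a [n [Hd [Hn HS]]]]; exists a, n; split => //; split => //.
by move=> z; rewrite -E.
Qed.

Lemma eq_APset S S' : S =i S' -> APset S -> APset S'.
Proof. by move=> E [d H]; exists d; exact: eq_has_dindex H. Qed.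

Lemma has_dindex_mem S d : has_dindex S d -> exists y, y \in S.
Proof.
by case=> a [n [_ [Hn HS]]]; exists a; rewrite HS; apply/memAP; exists 0 => //; lia.
Qed.

Lemma mem_sumset z A B :
  z \in sumset A B <-> exists x y, [/\ x \in A, y \in B & z = x + y].
Proof.
split.
- by case/allpairsP=> [[x y]] /= [Hx Hy ->]; exists x, y.
- by case=> x [y [Hx Hy ->]]; apply/allpairsP; exists (x, y).
Qed.

Lemma sumsetC A B : sumset A B =i sumset B A.
Proof.
move=> z; apply/idP/idP => /mem_sumset [x [y [Hx Hy ->]]]; apply/mem_sumset;
  by exists y, x; rewrite addnC.
Qed.

Definition shift c S := [seq x + c | x <- S].

Lemma shift_AP S a d n c : S =i AP a d n -> shift c S =i AP (a + c) d n.
Proof.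
move=> HS z; apply/idP/idP.
- case/mapP=> x; rewrite HS => /memAP [i Hi ->] ->; apply/memAP; exists i => //; lia.
- case/memAP=> i Hi ->; apply/mapP; exists (a + i * d); last lia.
  by rewrite HS; apply/memAP; exists i.
Qed.

Lemma has_dindex_shift S d c : has_dindex S d -> has_dindex (shift c S) d.
Proof.
case=> a [n [Hd [Hn HS]]]; exists (a + c), n; split => //; split => //.
exact: shift_AP.
Qed.

Lemma APset_shift S c : APset S -> APset (shift c S).
Proof. by case=> d H; exists d; exact: has_dindex_shift. Qed.

Lemma setcard_shift S c : setcard (shift c S) = setcard S.
Proof. by rewrite /setcard undup_map_inj ?size_map // => x y /addIn. Qed.

Lemma sumset_shift A B c c' :
  sumset (shift c A) (shift c' B) =i shift (c + c') (sumset A B).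
Proof.
move=> z; apply/idP/idP.
- case/mem_sumset=> x [y [/mapP[x' Hx ->] /mapP[y' Hy ->] ->]].
  apply/mapP; exists (x' + y'); first by apply/mem_sumset; exists x', y'.
  lia.
- case/mapP=> w /mem_sumset [x [y [Hx Hy ->]]] ->.
  apply/mem_sumset; exists (x + c), (y + c'); split; last lia.
  + by apply/mapP; exists x.
  + by apply/mapP; exists y.
Qed.

Lemma sumset_AP_mul A B a b d k m n : 0 < d -> 0 < k -> k <= m -> 0 < n ->
  A =i AP a d m -> B =i AP b (k * d) n ->
  sumset A B =i AP (a + b) d (m.-1 + n.-1 * k).+1.
Proof.
move=> Hd Hk Hkm Hn HA HB z; apply/idP/idP.
- case/mem_sumset=> x [y []]; rewrite HA HB => /memAP[i Hi ->] /memAP[j Hj ->] ->.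
  apply/memAP; exists (i + j * k); last by nia.
  have : j * k <= n.-1 * k by rewrite leq_mul2r; apply/orP; right; lia.
  lia.
- case/memAP=> t Ht ->.
  (* split t = j k + i with i < m, taking j as large as allowed *)
  pose j := minn (t %/ k) n.-1.
  have Hjt : j * k <= t.
    by apply: leq_trans (leq_divM t k); rewrite leq_mul2r geq_minl orbT.
  have Hi : t - j * k < m.
    have Hr := ltn_pmod t Hk; have Et := divn_eq t k.
    rewrite /j; lia.
  apply/mem_sumset; exists (a + (t - j * k) * d), (b + j * (k * d)); split.
  + by rewrite HA; apply/memAP; exists (t - j * k).
  + by rewrite HB; apply/memAP; exists j => //; rewrite /j; lia.
  + by rewrite mulnA -addnACA -mulnDl subnK.
Qed.

Section SumsetAPInverse.

Variables (A B : seq nat) (a b d d' m n : nat).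
Hypotheses (Hd : 0 < d) (Hdd' : d <= d') (Hm : 1 < m) (Hn : 1 < n).
Hypotheses (HA : A =i AP a d m) (HB : B =i AP b d' n).

Lemma AP_mem_sumset i j : i < m -> j < n -> a + i * d + (b + j * d') \in sumset A B.
Proof.
move=> Hi Hj; apply/mem_sumset; exists (a + i * d), (b + j * d'); split => //.
- by rewrite HA; apply/memAP; exists i.
- by rewrite HB; apply/memAP; exists j.
Qed.

Lemma sumset_memAP z : z \in sumset A B ->
  exists i j, [/\ i < m, j < n & z = a + i * d + (b + j * d')].
Proof.
by case/mem_sumset=> x [y []]; rewrite HA HB => /memAP[i Hi ->] /memAP[j Hj ->] ->;
  exists i, j.
Qed.

Variables (c D N : nat).
Hypotheses (HD : 0 < D) (HN : 1 < N) (HS : sumset A B =i AP c D N).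

(* The two smallest elements of the sumset are a + b and a + b + d. *)
Lemma sumset_AP_head : c = a + b /\ D = d.
Proof.
have [t0 _ E0] : exists2 t, t < N & a + 0 * d + (b + 0 * d') = c + t * D.
  by apply/memAP; rewrite -HS AP_mem_sumset //; lia.
have [i0 [j0 [_ _ E0']]] : exists i j, [/\ i < m, j < n & c + 0 * D = a + i * d + (b + j * d')].
  by apply: sumset_memAP; rewrite HS; apply/memAP; exists 0 => //; lia.
have Ec : c = a + b by nia.
split => //.
have [t1 _ E1] : exists2 t, t < N & a + 1 * d + (b + 0 * d') = c + t * D.
  by apply/memAP; rewrite -HS AP_mem_sumset //; lia.
have [i1 [j1 [_ _ E1']]] : exists i j, [/\ i < m, j < n & c + 1 * D = a + i * d + (b + j * d')].
  by apply: sumset_memAP; rewrite HS; apply/memAP; exists 1.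
have D_le : D <= d by case: t1 E1 => [|t1] E1; nia.
have D_ge : d <= D by case: i1 E1' => [|i1] E1'; [case: j1 E1' => [|j1] E1'|]; nia.
lia.
Qed.

Lemma sumset_AP_ratio : exists k, [/\ 0 < k, d' = k * d & k <= m].
Proof.
have [Ec ED] := sumset_AP_head; move: HS; rewrite Ec ED => HS'.
have [k _ Ek] : exists2 k, k < N & a + 0 * d + (b + 1 * d') = a + b + k * d.
  by apply/memAP; rewrite -HS' AP_mem_sumset //; lia.
have Ed' : d' = k * d by lia.
have Hk : 0 < k by nia.
exists k; split => //.
(* a + b + (m-1+k) d lies in the sumset, hence so does a + b + m d *)
have [t Ht Et] : exists2 t, t < N & a + m.-1 * d + (b + 1 * d') = a + b + t * d.
  by apply/memAP; rewrite -HS' AP_mem_sumset //; lia.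
have Ht' : t = m.-1 + k by apply/eqP; rewrite -(eqn_pmul2r Hd); apply/eqP; nia.
have [i [j [Hi _ Ej]]] : exists i j, [/\ i < m, j < n & a + b + m * d = a + i * d + (b + j * d')].
  by apply: sumset_memAP; rewrite HS'; apply/memAP; exists m => //; lia.
have Em : m = i + j * k by apply/eqP; rewrite -(eqn_pmul2r Hd); apply/eqP; nia.
by case: j Em {Ej} => [|j] Em; nia.
Qed.

End SumsetAPInverse.

Definition dindex_compatible (dA mA dB mB : nat) : Prop :=
  exists k, 0 < k /\ ((dB = k * dA /\ k <= mA) \/ (dA = k * dB /\ k <= mB)).

Lemma dindex_compatibleC dA mA dB mB :
  dindex_compatible dA mA dB mB -> dindex_compatible dB mB dA mA.
Proof. by case=> k [Hk H]; exists k; split => //; case: H; [right | left]. Qed.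

Lemma APset_sumsetP A B dA dB : has_dindex A dA -> has_dindex B dB ->
  APset (sumset A B) <-> dindex_compatible dA (setcard A) dB (setcard B).
Proof.
wlog HdAB : A B dA dB / dA <= dB.
  move=> IH HA HB; case: (leqP dA dB) => [|/ltnW] H; first exact: IH.
  split.
  - by move/(eq_APset (sumsetC A B))/(IH _ _ _ _ H HB HA)/dindex_compatibleC.
  - by move/dindex_compatibleC/(IH _ _ _ _ H HB HA)/(eq_APset (sumsetC B A)).
move=> [a [m [HdA [Hm HA]]]] [b [n [HdB [Hn HB]]]].
rewrite (setcard_AP HdA HA) (setcard_AP HdB HB); split.
- case=> D [c [N [HD [HN HS]]]].
  have [k [Hk Ek Hkm]] := sumset_AP_ratio HdA HdAB Hm Hn HA HB HD HN HS.
  by exists k; split => //; left.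
- move=> Hc; have [k [Hk Ek Hkm]] : exists k, [/\ 0 < k, dB = k * dA & k <= m].
    case: Hc => k [Hk [[Ek Hkm]|[Ek _]]]; first by exists k.
    by exists 1; split => //; nia.
  exists dA, (a + b), (m.-1 + n.-1 * k).+1; split => //; split; first by nia.
  by apply: sumset_AP_mul Hkm _ HA _ => //; [lia | rewrite -Ek].
Qed.

Lemma eq_block_index N a b P Q :
  a < N -> b < N -> a + N * P = b + N * Q -> P = Q.
Proof. by move=> *; nia. Qed.

Lemma pow2_sum_lt a b c d :
  a < b -> c < d -> 2 ^ a + 2 ^ b = 2 ^ c + 2 ^ d -> a = c /\ b = d.
Proof.
move=> Hab Hcd E.
have Lab : 2 ^ a < 2 ^ b by rewrite ltn_exp2l.
have Lcd : 2 ^ c < 2 ^ d by rewrite ltn_exp2l.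
have Ebd : b = d.
  case: (ltngtP b d) => // H.
  - have : 2 ^ b.+1 <= 2 ^ d by rewrite leq_exp2l.
    rewrite expnS; lia.
  - have : 2 ^ d.+1 <= 2 ^ b by rewrite leq_exp2l.
    rewrite expnS; lia.
subst d; split => //.
by apply/eqP; rewrite -(@eqn_exp2l 2) //; apply/eqP; lia.
Qed.

Lemma pow2_sum_inj a b c d : a != b -> c != d -> 2 ^ a + 2 ^ b = 2 ^ c + 2 ^ d ->
  (a = c /\ b = d) \/ (a = d /\ b = c).
Proof.
rewrite !neq_ltn => /orP[H1|H1] /orP[H2|H2] E.
- by left; apply: pow2_sum_lt.
- by right; apply: pow2_sum_lt => //; lia.
- by right; case: (pow2_sum_lt H1 H2 ltac:(lia)) => -> ->.
- by left; case: (pow2_sum_lt H1 H2 ltac:(lia)) => -> ->.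
Qed.

Section BlockLabelling.

Variables (T : finType) (base : T -> seq nat).
Hypothesis base_mem : forall x, exists y, y \in base x.

Definition label_bound := (\max_(x : T) \max_(a <- base x) a).+1.

(* Blocks of width 2 * label_bound leave room for sums of two base elements. *)
Definition block_offset (x : T) := 2 * label_bound * 2 ^ enum_rank x.

Definition block_label x := shift (block_offset x) (base x).

Lemma label_bound_gt x y : y \in base x -> y < label_bound.
Proof.
move=> Hy; rewrite ltnS.
apply: leq_trans (leq_bigmax (F := fun x => \max_(a <- base x) a) x).
exact: (leq_bigmax_seq (P := xpredT) (F := id)).
Qed.

Lemma enum_rank_nat_inj : injective (fun x : T => nat_of_ord (enum_rank x)).
Proof. by move=> x y /val_inj/enum_rank_inj. Qed.

Lemma block_label_inj x y : block_label x =i block_label y -> x = y.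
Proof.
move=> E; have [z Hz] := base_mem x.
have : z + block_offset x \in block_label y by rewrite -E; apply: map_f.
case/mapP=> z' Hz' Ez.
have Lz := label_bound_gt Hz; have Lz' := label_bound_gt Hz'.
have /eqP : 2 ^ enum_rank x = 2 ^ enum_rank y.
  by apply: (@eq_block_index (2 * label_bound) z z'); rewrite /block_offset in Ez; lia.
by rewrite eqn_exp2l // => /eqP /enum_rank_nat_inj.
Qed.

Lemma block_label_sumset_inj u v x y : u != v -> x != y ->
  sumset (block_label u) (block_label v) =i sumset (block_label x) (block_label y) ->
  (u = x /\ v = y) \/ (u = y /\ v = x).
Proof.
move=> Huv Hxy E; have [z Hz] := base_mem u; have [w Hw] := base_mem v.
have : (z + block_offset u) + (w + block_offset v) \in sumset (block_label x) (block_label y).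
  by rewrite -E; apply/mem_sumset; exists (z + block_offset u), (w + block_offset v);
    split => //; apply: map_f.
case/mem_sumset=> _ [_ [/mapP[z' Hz' ->] /mapP[w' Hw' ->] Ez]].
have Lz := label_bound_gt Hz; have Lw := label_bound_gt Hw.
have Lz' := label_bound_gt Hz'; have Lw' := label_bound_gt Hw'.
have Epow : 2 ^ enum_rank u + 2 ^ enum_rank v = 2 ^ enum_rank x + 2 ^ enum_rank y.
  by apply: (@eq_block_index (2 * label_bound) (z + w) (z' + w'));
    rewrite /block_offset in Ez; nia.
have rank_neq (s t : T) : s != t -> (enum_rank s : nat) != enum_rank t.
  by rewrite (inj_eq enum_rank_nat_inj).
have [[Eux Evy]|[Euy Evx]] := pow2_sum_inj (rank_neq _ _ Huv) (rank_neq _ _ Hxy) Epow.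
- by left; split; apply: enum_rank_nat_inj.
- by right; split; apply: enum_rank_nat_inj.
Qed.

Lemma IASI_block_label (e : rel T) : irreflexive e -> IASI e block_label.
Proof.
move=> irr_e; split; first exact: block_label_inj.
have neq_edge s t : e s t -> s != t by apply: contraTneq => ->; rewrite irr_e.
by move=> u v x y /neq_edge Huv /neq_edge Hxy; apply: block_label_sumset_inj.
Qed.

End BlockLabelling.

Section CoronaLabelling.

Variables (T1 T2 : finType) (e1 : rel T1) (e2 : rel T2).
Variables (f1 : T1 -> seq nat) (f2 : T2 -> seq nat) (d1 : T1 -> nat) (d2 : T2 -> nat).

Definition corona_base (x : T1 + T1 * T2) : seq nat :=
  match x with inl u => f1 u | inr p => f2 p.2 end.

Lemma corona_irreflexive :
  irreflexive e1 -> irreflexive e2 -> irreflexive (corona e1 e2).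
Proof. by move=> irr1 irr2 [u|[i v]] /=; rewrite ?irr1 ?irr2 ?andbF. Qed.

Hypotheses (Hd1 : forall u, has_dindex (f1 u) (d1 u))
           (Hd2 : forall v, has_dindex (f2 v) (d2 v)).

Lemma has_dindex_corona_base x : exists d, has_dindex (corona_base x) d.
Proof. by case: x => [u|[i v]]; [exists (d1 u); apply: Hd1 | exists (d2 v); apply: Hd2]. Qed.

Hypotheses (Ae1 : forall u v, e1 u v -> APset (sumset (f1 u) (f1 v)))
           (Ae2 : forall u v, e2 u v -> APset (sumset (f2 u) (f2 v))).
Hypothesis Hc : forall u v,
  dindex_compatible (d1 u) (setcard (f1 u)) (d2 v) (setcard (f2 v)).

Lemma corona_base_edge_APset x y :
  corona e1 e2 x y -> APset (sumset (corona_base x) (corona_base y)).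
Proof.
case: x y => [u|[i v]] [w|[j w]] /=.
- exact: Ae1.
- by move=> _; apply/(APset_sumsetP (Hd1 u) (Hd2 w))/Hc.
- by move=> _; apply: (eq_APset (sumsetC _ _)); apply/(APset_sumsetP (Hd1 w) (Hd2 v))/Hc.
- by case/andP=> _; exact: Ae2.
Qed.

End CoronaLabelling.

Theorem mainTheorem10 (T1 T2 : finType) (e1 : rel T1) (e2 : rel T2)
  (f1 : T1 -> seq nat) (f2 : T2 -> seq nat) (d1 : T1 -> nat) (d2 : T2 -> nat) :
  simple_graph e1 -> simple_graph e2 ->
  arithmetic_IASI e1 f1 -> arithmetic_IASI e2 f2 ->
  (forall u, has_dindex (f1 u) (d1 u)) ->
  (forall v, has_dindex (f2 v) (d2 v)) ->
  (exists g : (T1 + T1 * T2)%type -> seq nat,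
      arithmetic_IASI (corona e1 e2) g /\
      (forall u, has_dindex (g (inl u)) (d1 u) /\
                 setcard (g (inl u)) = setcard (f1 u)) /\
      (forall i v, has_dindex (g (inr (i, v))) (d2 v) /\
                   setcard (g (inr (i, v))) = setcard (f2 v)))
  <->
  (forall u v, exists k, 0 < k /\
      ((d2 v = k * d1 u /\ k <= setcard (f1 u)) \/
       (d1 u = k * d2 v /\ k <= setcard (f2 v)))).
Proof.
move=> [_ [irr1 _]] [_ [irr2 _]] [_ [_ Ae1]] [_ [_ Ae2]] Hd1 Hd2; split.
- move=> [g [[_ [_ Ae]] [Hl Hr]]] u v.
  have [Hgu <-] := Hl u; have [Hgv <-] := Hr u v.
  by apply/(APset_sumsetP Hgu Hgv)/Ae; rewrite /= eqxx.
- move=> Hc; pose base := corona_base f1 f2.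
  have base_mem x : exists y, y \in base x.
    by have [d Hd] := has_dindex_corona_base Hd1 Hd2 x; exact: has_dindex_mem Hd.
  exists (block_label base); split; [split; [|split] | split].
  + exact/IASI_block_label/corona_irreflexive.
  + move=> x; have [d Hd] := has_dindex_corona_base Hd1 Hd2 x.
    by exists d; exact: has_dindex_shift.
  + move=> x y /(corona_base_edge_APset Hd1 Hd2 Ae1 Ae2 Hc).
    move/(APset_shift (block_offset base x + block_offset base y)).
    by apply: eq_APset => z; rewrite /block_label sumset_shift.
  + by move=> u; rewrite setcard_shift; split => //; exact/has_dindex_shift/Hd1.
  + by move=> i v; rewrite setcard_shift; split => //; exact/has_dindex_shift/Hd2.
Qed.
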